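(* Let $H$ be a compactly generated locally compact group such that for every pair $(X,\alpha),(Y,\beta)$ in $\mathrm{Geom}(H)$ the orbital map $X\to Y$ is a rough similarity. Then: (1) if $K$ is a compact normal subgroup of $H$, then for every pair $(X,\alpha),(Y,\beta)$ in $\mathrm{Geom}(H/K)$ the orbital map $X\to Y$ is a rough similarity; (2) if $G$ is a locally compact group receiving an injective continuous homomorphism from $H$ with closed cocompact image, then for every pair $(X,\alpha),(Y,\beta)$ in $\mathrm{Geom}(G)$ the orbital map $X\to Y$ is a rough similarity.
   Context: For a locally compact compactly generated group $G$, $\mathrm{Geom}(G)$ is the collection of pairs $(X,\alpha)$ with $X$ a proper geodesic metric space and $\alpha\colon G\to\mathrm{Isom}(X)$ a continuous, proper, cocompact action. For $(X,\alpha),(Y,\beta)\in\mathrm{Geom}(G)$ and points $o_X\in X$, $o_Y\in Y$, the orbital map is the map $\alpha(\gamma)o_X\mapsto\beta(\gamma)o_Y$ ($\gamma\in G$), extended to a quasiisometry $X\to Y$ and considered up to bounded distance. A map $\phi$ is a rough similarity if there are $\lambda>0$, $c\ge0$ with $\lambda d(x,x')-c\le d(\phi x,\phi x')\le\lambda d(x,x')+c$ for all $x,x'$. *)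

From HB Require Import structures.
From mathcomp Require Import all_boot all_order all_algebra.
From mathcomp Require Import all_classical all_reals all_analysis.
From mathcomp Require Import Rstruct Rstruct_topology.
From Stdlib Require Import Rdefinitions.
Set Implicit Arguments. Unset Strict Implicit. Unset Printing Implicit Defensive.
Import Order.TTheory GRing.Theory Num.Theory.
Local Open Scope classical_set_scope.
Local Open Scope ring_scope.

Record TopGroup := {
  tg_car :> topologicalType;
  tg_mul : tg_car -> tg_car -> tg_car;
  tg_one : tg_car;
  tg_inv : tg_car -> tg_car;
  tg_mulA : forall x y z, tg_mul x (tg_mul y z) = tg_mul (tg_mul x y) z;
  tg_mul1g : forall x, tg_mul tg_one x = x;
  tg_mulVg : forall x, tg_mul (tg_inv x) x = tg_one;
  tg_mul_cont : continuous (fun p : tg_car * tg_car => tg_mul p.1 p.2);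
  tg_inv_cont : continuous tg_inv }.

Arguments tg_mul {t}. Arguments tg_one {t}. Arguments tg_inv {t}.

Definition locally_compact_group (G : TopGroup) : Prop :=
  hausdorff_space G /\ forall x : G, exists U : set G, nbhs x U /\ compact U.

Definition generates (G : TopGroup) (S : set G) : Prop :=
  forall P : set G, S `<=` P -> P tg_one ->
    (forall x y, P x -> P y -> P (tg_mul x y)) -> (forall x, P x -> P (tg_inv x)) ->
    P = setT.

Definition compactly_generated (G : TopGroup) : Prop :=
  exists S : set G, compact S /\ generates S.

Definition group_hom (G1 G2 : TopGroup) (f : G1 -> G2) : Prop :=
  forall x y, f (tg_mul x y) = tg_mul (f x) (f y).

Definition normal_subgroup (G : TopGroup) (K : set G) : Prop :=
  K tg_one /\ (forall x y, K x -> K y -> K (tg_mul x y)) /\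
  (forall x, K x -> K (tg_inv x)) /\
  (forall g x, K x -> K (tg_mul (tg_mul g x) (tg_inv g))).

Record MetricSpace := {
  ms_car :> Type;
  ms_d : ms_car -> ms_car -> R;
  ms_d_ge0 : forall x y, 0 <= ms_d x y;
  ms_d_eq0 : forall x y, ms_d x y = 0 <-> x = y;
  ms_dC : forall x y, ms_d x y = ms_d y x;
  ms_d_tri : forall x y z, ms_d x z <= ms_d x y + ms_d y z }.

Arguments ms_d {m}.

Definition mopen (X : MetricSpace) (U : set X) : Prop :=
  forall x, U x -> exists r : R, 0 < r /\ [set y | ms_d x y < r] `<=` U.

Definition mcompact (X : MetricSpace) (A : set X) : Prop :=
  forall (I : Type) (U : I -> set X), (forall i, mopen (U i)) ->
    A `<=` \bigcup_(i in [set: I]) U i ->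
    exists s : seq I, A `<=` [set x | exists i, List.In i s /\ U i x].

Definition proper_metric (X : MetricSpace) : Prop :=
  forall (x : X) (r : R), mcompact [set y | ms_d x y <= r].

Definition geodesic_metric (X : MetricSpace) : Prop :=
  forall x y : X, exists c : R -> X, c 0 = x /\ c (ms_d x y) = y /\
    forall s t : R, 0 <= s <= ms_d x y -> 0 <= t <= ms_d x y ->
      ms_d (c s) (c t) = `|s - t|.

Definition isometry (X : MetricSpace) (f : X -> X) : Prop :=
  bijective f /\ forall x y, ms_d (f x) (f y) = ms_d x y.

(* Continuity into Isom(X) (compact-open topology,
   which on Isom(X) agrees with the topology of pointwise convergence) is
   continuity of every orbit map g |-> alpha g x. *)
Definition in_Geom (G : TopGroup) (X : MetricSpace) (alpha : G -> X -> X) : Prop :=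
  proper_metric X /\ geodesic_metric X /\
  ((forall g, isometry (alpha g)) /\
   (forall g h x, alpha (tg_mul g h) x = alpha g (alpha h x)) /\
   (forall x, alpha tg_one x = x)) /\
  (forall (x : X) (g : G) (e : R), 0 < e ->
     exists U : set G, nbhs g U /\ forall h, U h -> ms_d (alpha h x) (alpha g x) < e) /\
  (forall K : set X, mcompact K ->
     compact (closure [set g : G | exists k, K k /\ K (alpha g k)])) /\
  (exists K : set X, mcompact K /\ forall x : X, exists g k, K k /\ x = alpha g k).

Definition rough_similarity (X Y : MetricSpace) (phi : X -> Y) : Prop :=
  exists lam c : R, 0 < lam /\ 0 <= c /\ forall x x' : X,
    lam * ms_d x x' - c <= ms_d (phi x) (phi x') <= lam * ms_d x x' + c.

(* The orbital map alpha(g) oX |-> beta(g) oY, extended to X and taken up to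
   bounded distance, is a rough similarity: some map X -> Y at bounded distance
   from the orbit correspondence is a rough similarity. *)
Definition orbital_map_rough_similarity (G : TopGroup) (X Y : MetricSpace)
    (alpha : G -> X -> X) (beta : G -> Y -> Y) (oX : X) (oY : Y) : Prop :=
  exists phi : X -> Y, rough_similarity phi /\
    exists C : R, forall g : G, ms_d (phi (alpha g oX)) (beta g oY) <= C.

Definition Geom_orbital_rough_similar (G : TopGroup) : Prop :=
  forall (X Y : MetricSpace) (alpha : G -> X -> X) (beta : G -> Y -> Y),
    in_Geom alpha -> in_Geom beta ->
    forall (oX : X) (oY : Y), orbital_map_rough_similarity alpha beta oX oY.

(* Both parts follow from one transfer principle.  Let f : H -> G be a
   continuous homomorphism that is proper and has cocompact image, G = f(H) C
   with C compact.  Composing with f turns every (X, alpha) in Geom(G) into an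
   element of Geom(H); and since every g is f(h) c with c in C, whose orbits
   through the base points are bounded, an orbital map for H stays at bounded
   distance from the orbital map for G, which is therefore a rough similarity
   as soon as the former is.  The quotient map by a compact normal subgroup is
   such an f with C = {1}.  For a closed embedding of the compactly generated,
   hence sigma-compact, group H, properness comes from the Baire category
   theorem in the locally compact group G: the image of some compact piece of
   H has nonempty interior in f(H), and translating it back gives a
   neighbourhood of 1 with relatively compact preimage. *)

From HB Require Import structures.
From mathcomp Require Import all_boot all_order all_algebra.
From mathcomp Require Import all_classical all_reals all_analysis.
From mathcomp Require Import Rstruct Rstruct_topology lra.
From Stdlib Require Import Rdefinitions.
Set Implicit Arguments. Unset Strict Implicit. Unset Printing Implicit Defensive.
Import Order.TTheory GRing.Theory Num.Theory numFieldNormedType.Exports.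
Local Open Scope classical_set_scope.

Section TopGroupTheory.
Variable G : TopGroup.
Local Notation "x * y" := (tg_mul x y).
Local Notation "x ^-1" := (tg_inv x).
Local Notation "1" := (@tg_one G).

Lemma tg_mulgV (x : G) : x * x^-1 = 1.
Proof.
have e : (x^-1)^-1 * x^-1 = 1 := tg_mulVg _.
rewrite -[x * x^-1]tg_mul1g -{1}e -tg_mulA (tg_mulA (x^-1)) tg_mulVg tg_mul1g.
exact: e.
Qed.

Lemma tg_mulg1 (x : G) : x * 1 = x.
Proof. by rewrite -(tg_mulVg x) tg_mulA tg_mulgV tg_mul1g. Qed.

Lemma tg_mulKg (a x : G) : a^-1 * (a * x) = x.
Proof. by rewrite tg_mulA tg_mulVg tg_mul1g. Qed.

Lemma tg_mulKVg (a x : G) : a * (a^-1 * x) = x.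
Proof. by rewrite tg_mulA tg_mulgV tg_mul1g. Qed.

Lemma tg_invg_uniq (a b : G) : a * b = 1 -> a = b^-1.
Proof. by move=> ab1; rewrite -[a]tg_mulg1 -(tg_mulgV b) tg_mulA ab1 tg_mul1g. Qed.

Lemma tg_invgK (x : G) : (x^-1)^-1 = x.
Proof. by symmetry; apply: tg_invg_uniq; rewrite tg_mulgV. Qed.

Lemma tg_invMg (x y : G) : (x * y)^-1 = y^-1 * x^-1.
Proof. by symmetry; apply: tg_invg_uniq; rewrite -tg_mulA tg_mulKg tg_mulVg. Qed.

Lemma tg_invg1 : 1^-1 = 1.
Proof. by symmetry; apply: tg_invg_uniq; rewrite tg_mul1g. Qed.

Lemma continuous_tg_mull (a : G) : continuous (tg_mul a).
Proof.
move=> x; apply: (@continuous2_cvg _ _ _ _ _ _ (fun=> a) id (fun u v => u * v)).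
- exact: (@tg_mul_cont G (a, x)).
- exact: cvg_cst.
- exact: cvg_id.
Qed.

Lemma nbhs_tg_mull (a x : G) (U : set G) :
  nbhs x U -> nbhs (a * x) [set y | U (a^-1 * y)].
Proof.
by move=> Ux; apply: (@continuous_tg_mull a^-1 (a * x)); rewrite tg_mulKg.
Qed.

Lemma compact_tg_mull (a : G) (A : set G) : compact A -> compact (tg_mul a @` A).
Proof. by apply: continuous_compact; apply/continuous_subspaceT/continuous_tg_mull. Qed.

Lemma compact_tg_mul (A B : set G) : compact A -> compact B ->
  compact [set a * b | a in A & b in B].
Proof.
move=> cA cB; rewrite image2E; apply: continuous_compact; last exact: compact_setX.
have -> : uncurry (@tg_mul G) = (fun p => p.1 * p.2) by apply/funext => -[].
exact/continuous_subspaceT/tg_mul_cont.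
Qed.

End TopGroupTheory.

Lemma group_hom1 (G1 G2 : TopGroup) (f : G1 -> G2) : group_hom f -> f tg_one = tg_one.
Proof.
move=> fM; have f11 := fM tg_one tg_one; rewrite tg_mul1g in f11.
by have := tg_mulKg (f tg_one) (f tg_one); rewrite -f11 tg_mulVg.
Qed.

Lemma group_homV (G1 G2 : TopGroup) (f : G1 -> G2) (x : G1) :
  group_hom f -> f (tg_inv x) = tg_inv (f x).
Proof. by move=> fM; apply: tg_invg_uniq; rewrite -fM tg_mulVg group_hom1. Qed.

(* Relatively compact preimages, which is all that properness of a pulled-back
   action uses. *)
Definition proper_map (T U : topologicalType) (f : T -> U) :=
  forall C : set U, compact C -> exists2 E : set T, compact E & f @^-1` C `<=` E.

Lemma compact_finite_nbhs_cover (T : topologicalType) (C : set T) (O : T -> set T) :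
  compact C -> (forall x, C x -> nbhs x (O x)) ->
  exists s : seq T, C `<=` \bigcup_(x in [set` s]) O x.
Proof.
move=> cC CO; apply: contrapT => /forallNP noCover.
pose B (s : seq T) := C `\` \bigcup_(x in [set` s]) O x.
have BF : ProperFilter (filter_from setT B).
  apply: filter_from_proper; last first.
    move=> s _; apply: contrapT => nB; apply: (noCover s) => y Cy.
    by apply: contrapT => nOy; apply: nB; exists y.
  apply: filter_from_filter; first by exists [::].
  move=> s t _ _; exists (s ++ t) => // y [Cy nOy].
  by split; split => // -[x xst Oxy]; apply: nOy; exists x => //=; rewrite mem_cat xst ?orbT.
have [|x [Cx clx]] := cC _ BF; first by exists [::] => // y [].
have [y [[_ nOy] Oy]] := clx _ _ (ex_intro2 _ _ [:: x] I (fun=> id)) (CO x Cx).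
by apply: nOy; exists x => //=; rewrite mem_seq1.
Qed.

Lemma proper_map_local (T U : topologicalType) (f : T -> U) :
  (forall y : U, exists (O : set U) (E : set T),
    [/\ nbhs y O, compact E & f @^-1` O `<=` E]) ->
  proper_map f.
Proof.
move=> loc C cC.
have [OE OEP] : {OE : U -> set U * set T & forall y,
    [/\ nbhs y (OE y).1, compact (OE y).2 & f @^-1` (OE y).1 `<=` (OE y).2]}.
  apply: (@choice _ _ (fun y p => [/\ nbhs y p.1, compact p.2 & f @^-1` p.1 `<=` p.2])).
  by move=> y; have [Oy [Ey OEy]] := loc y; exists (Oy, Ey).
have [|s CO] := compact_finite_nbhs_cover cC (O := fun y => (OE y).1).
  by move=> y _; case: (OEP y).
exists (\bigcup_(y in [set` s]) (OE y).2).
  by rewrite bigcup_seq; apply: bigsetU_compact => y _; case: (OEP y).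
move=> x /CO[y sy Oy]; exists y => //.
by case: (OEP y) => _ _; apply.
Qed.

Lemma group_hom_proper (H G : TopGroup) (f : H -> G) (W : set G) (E : set H) :
  group_hom f -> closed (range f) -> nbhs tg_one W -> compact E -> f @^-1` W `<=` E ->
  proper_map f.
Proof.
move=> fM closedR W1 cE fWE; apply: proper_map_local => y.
have [[h _ <-]|Ny] := pselect (range f y).
  exists [set g | W (tg_mul (tg_inv (f h)) g)], (tg_mul h @` E); split.
  - by have := nbhs_tg_mull (f h) W1; rewrite tg_mulg1.
  - exact: compact_tg_mull.
  - move=> x /= Wx; exists (tg_mul (tg_inv h) x); last by rewrite tg_mulKVg.
    by apply: fWE; rewrite /= fM group_homV.
exists (~` range f), set0; split.
- by apply: open_nbhs_nbhs; split => //; exact: closed_openC.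
- exact: compact0.
- by move=> x /=; apply; exists x.
Qed.

Lemma quotient_map_proper (H Q : TopGroup) (K : set H) (pi : H -> Q) :
  locally_compact_group H -> compact K -> group_hom pi ->
  (forall U : set H, open U -> open (pi @` U)) -> (forall q, exists h, pi h = q) ->
  (forall h, pi h = tg_one <-> K h) ->
  proper_map pi.
Proof.
move=> [_ lcH] cK piM piO piS piK; have [N [N1 cN]] := lcH tg_one.
apply: (@group_hom_proper _ _ _ (pi @` N°) [set tg_mul a b | a in N & b in K]) => //.
- have -> : range pi = setT.
    by apply/seteqP; split => // q _; have [h hq] := piS q; exists h.
  exact: closedT.
- apply: open_nbhs_nbhs; split; first by apply/piO/open_interior.
  exists tg_one; last exact: group_hom1.
  exact: nbhs_singleton (nbhs_interior N1).
- exact: compact_tg_mul.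
move=> x [n Nn pinx]; exists n; first exact: interior_subset.
exists (tg_mul (tg_inv n) x); last by rewrite tg_mulKVg.
by apply/piK; rewrite piM group_homV // pinx tg_mulVg.
Qed.

Section CompactlyGenerated.
Variable H : TopGroup.

(* [set_pow S n] is S^(n+1). *)
Fixpoint set_pow (S : set H) (n : nat) : set H :=
  if n is n'.+1 then [set tg_mul x s | x in set_pow S n' & s in S] else S.

Lemma compact_set_pow (S : set H) n : compact S -> compact (set_pow S n).
Proof. by move=> cS; elim: n => [|n IHn] //=; exact: compact_tg_mul. Qed.

Lemma set_pow_mul (S : set H) a b x y :
  set_pow S a x -> set_pow S b y -> set_pow S (a + b).+1 (tg_mul x y).
Proof.
elim: b y => [|b IHb] y Sx; first by rewrite addn0 => Sy; exists x => //; exists y.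
move=> [y' Sy' [s Ss <-]]; rewrite addnS; exists (tg_mul x y'); first exact: IHb.
by exists s; last rewrite tg_mulA.
Qed.

Lemma set_pow_inv (S : set H) n x : (forall s, S s -> S (tg_inv s)) ->
  set_pow S n x -> set_pow S n (tg_inv x).
Proof.
move=> SV; elim: n x => [|n IHn] x /=; first exact: SV.
move=> [x' Sx' [s Ss <-]]; rewrite tg_invMg.
by have := @set_pow_mul S 0 n _ _ (SV _ Ss) (IHn _ Sx'); rewrite add0n.
Qed.

Lemma compactly_generated_sigma_compact : compactly_generated H ->
  exists P : nat -> set H, (forall n, compact (P n)) /\ forall h, exists n, P n h.
Proof.
move=> [S [cS genS]]; pose S' := S `|` tg_inv @` S `|` [set tg_one].
have cS' : compact S'.
  apply/compactU/compact_set1/compactU => //.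
  by apply: continuous_compact => //; exact/continuous_subspaceT/tg_inv_cont.
have S'V s : S' s -> S' (tg_inv s).
  move=> [[Ss|[t St <-]]|->].
  - by left; right; exists s.
  - by left; left; rewrite tg_invgK.
  - by right; rewrite tg_invg1.
exists (set_pow S'); split => [n|h]; first exact: compact_set_pow.
suff : [set x | exists n, set_pow S' n x] = setT by move/seteqP => [_ /(_ h I)].
apply: genS.
- by move=> x Sx; exists 0; left; left.
- by exists 0; right.
- by move=> x y [a Sx] [b Sy]; exists (a + b).+1; exact: set_pow_mul.
- by move=> x [a Sx]; exists a; exact: set_pow_inv.
Qed.

End CompactlyGenerated.

Lemma nested_compact_cap (T : topologicalType) (E : nat -> set T) :
  compact (E 0) -> (forall n, closed (E n)) -> (forall n, E n.+1 `<=` E n) ->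
  (forall n, E n !=set0) -> exists x, forall n, E n x.
Proof.
move=> cE0 clE decE E0.
have monoE n m : (n <= m)%N -> E m `<=` E n.
  by move=> /subnKC <-; elim: (m - n)%N => [|k IHk]; rewrite ?addn0 // addnS => x /decE /IHk.
have EF : ProperFilter (filter_from setT E).
  apply: filter_from_proper => [|n _]; last exact: E0.
  apply: filter_from_filter; first by exists 0.
  move=> i j _ _; exists (maxn i j) => // x Ex.
  by split; apply: (monoE _ (maxn i j)) => //; rewrite ?leq_maxl ?leq_maxr.
have [|x [_ clx]] := cE0 _ EF; first by exists 0.
exists x => n; rewrite [E n](closure_id _).1 //; move: clx; rewrite clusterE; apply.
by exists n.
Qed.

Section LocallyCompactBaire.
Variable T : topologicalType.
Hypothesis T_hausdorff : hausdorff_space T.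
Hypothesis T_locally_compact : forall x : T, exists U, nbhs x U /\ compact U.

Lemma nbhs_compact_closure (x : T) (W : set T) : nbhs x W ->
  exists V, [/\ open V, V x, compact (closure V) & closure V `<=` W].
Proof.
move=> Wx; have [N [Nx cN]] := T_locally_compact x.
have [D Dx DNW] := compact_regular T_hausdorff cN Nx (filterI Nx Wx).
have DsubN : closure D° `<=` N `&` W.
  exact: subset_trans (closureS (@interior_subset _ D)) DNW.
exists D°; split.
- exact: open_interior.
- exact: nbhs_singleton (nbhs_interior Dx).
- apply: subclosed_compact cN _; first exact: closed_closure.
  by move=> y /DsubN[].
- by move=> y /DsubN[].
Qed.

Lemma locally_compact_baire (R : set T) (F : nat -> set T) :
  closed R -> R !=set0 -> (forall n, closed (F n)) -> R `<=` \bigcup_n F n ->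
  exists n U, [/\ open U, R `&` U !=set0 & R `&` U `<=` F n].
Proof.
move=> clR [r Rr] clF RF; apply: contrapT => noInterior.
pose good V := open V /\ R `&` V !=set0.
have step n V : good V -> exists2 V', good V' & closure V' `<=` V `\` F n.
  move=> [oV [x0 RVx0]].
  have [x [[Rx Vx] Fx]] : exists x, (R `&` V) x /\ ~ F n x.
    apply: contrapT => /forallNP allF; apply: noInterior; exists n, V.
    by split => [||y RVy]; [|exists x0|apply: contrapT => /(conj RVy)/allF].
  have VFx : nbhs x (V `\` F n).
    by apply: open_nbhs_nbhs; split => //; apply: openI => //; exact: closed_openC.
  have [V' [oV' V'x _ clV']] := nbhs_compact_closure VFx.
  by exists V' => //; split => //; exists x.
have [next nextP] : {next : nat * set T -> set T & forall p, good p.2 ->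
    good (next p) /\ closure (next p) `<=` p.2 `\` F p.1}.
  apply: (@choice _ _ (fun p V' => good p.2 -> good V' /\ closure V' `<=` p.2 `\` F p.1)).
  move=> -[n V] /=.
  have [/(step n)[V' gV' clV']|bad] := pselect (good V); first by exists V'.
  by exists set0.
have [V0 [oV0 V0r cV0 _]] := nbhs_compact_closure (@filterT _ (nbhs r) _).
pose V := fix V n := if n is n'.+1 then next (n', V n') else V0.
have goodV n : good (V n).
  by elim: n => [|n IHn]; [split => //; exists r | exact: (nextP (n, V n) IHn).1].
have shrinkV n : closure (V n.+1) `<=` V n `\` F n := (nextP (n, V n) (goodV n)).2.
have [x Vx] : exists x, forall n, (R `&` closure (V n)) x.
  apply: nested_compact_cap.
  - by rewrite setIC; apply: compact_closedI.
  - by move=> n; apply: closedI => //; exact: closed_closure.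
  - by move=> n y [Ry /shrinkV[/subset_closure Vy _]].
  - by move=> n; have [_ [y [Ry /subset_closure Vy]]] := goodV n; exists y.
have [n _ Fx] := RF x (Vx 0).1.
by have [_ /shrinkV[]] := Vx n.+1.
Qed.

End LocallyCompactBaire.

Lemma closed_embedding_proper (H G : TopGroup) (iota : H -> G) :
  locally_compact_group G -> compactly_generated H -> group_hom iota ->
  continuous iota -> injective iota -> closed (range iota) ->
  proper_map iota.
Proof.
move=> [hG lcG] cgH iM iC iI clR.
have [P [cP covP]] := compactly_generated_sigma_compact cgH.
have [n [U [oU [_ [[h0 _ <-] Uh0]] RUP]]] : exists n U,
    [/\ open U, range iota `&` U !=set0 & range iota `&` U `<=` iota @` P n].
  apply: locally_compact_baire => //.
  - by exists (iota tg_one), tg_one.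
  - move=> n; apply: compact_closed => //.
    exact: continuous_compact (continuous_subspaceT iC) (cP n).
  - by move=> _ [h _ <-]; have [n Pnh] := covP h; exists n => //; exists h.
apply: (@group_hom_proper _ _ _ [set g | U (tg_mul (iota h0) g)]
  (tg_mul (tg_inv h0) @` P n)) => //.
- have := nbhs_tg_mull (tg_inv (iota h0)) (open_nbhs_nbhs (conj oU Uh0)).
  by rewrite tg_invgK tg_mulVg.
- exact: compact_tg_mull.
move=> h /= Uh; have /RUP[p Pp /iI ph] : (range iota `&` U) (iota (tg_mul h0 h)).
  by split; [exists (tg_mul h0 h) | rewrite iM].
by exists p => //; rewrite ph tg_mulKg.
Qed.

Local Open Scope ring_scope.

Lemma seq_In_bounded (I : Type) (s : seq I) (t : I -> R) :
  exists M, forall i, List.In i s -> t i <= M.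
Proof.
elim: s => [|a s [M sM]]; first by exists 0.
by exists (Num.max (t a) M) => i [<-|/sM tiM]; rewrite le_max ?lexx ?tiM ?orbT.
Qed.

Lemma mopen_ball (X : MetricSpace) (x : X) (r : R) : mopen [set y | ms_d x y < r].
Proof.
move=> y xyr; exists (r - ms_d x y); split; first by rewrite subr_gt0.
by move=> z /= yzr; have := ms_d_tri x y z; lra.
Qed.

Lemma mcompact_bounded (X : MetricSpace) (K : set X) (x0 : X) :
  mcompact K -> exists M, forall k, K k -> ms_d x0 k <= M.
Proof.
move=> cK; have [|s Ks] := cK nat (fun n => [set y | ms_d x0 y < n%:R])
  (fun n => @mopen_ball _ x0 n%:R).
  by move=> k _; exists (Num.truncn (ms_d x0 k)).+1 => //; exact: truncnS_gt.
have [M sM] := seq_In_bounded s (fun n => n%:R).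
by exists M => k /Ks[n [sn /= kn]]; have := sM n sn; lra.
Qed.

Lemma closure_preimage (T U : topologicalType) (f : T -> U) (A : set U) :
  continuous f -> closure (f @^-1` A) `<=` f @^-1` closure A.
Proof.
move=> fC; have clA : closed (f @^-1` closure A).
  by apply: preimage_closed; [move=> x _; exact: fC | exact: closed_closure].
rewrite [X in _ `<=` X](closure_id _).1 //; apply/closureS => x /=; exact: subset_closure.
Qed.

Section GeomAction.
Variables (G : TopGroup) (X : MetricSpace) (alpha : G -> X -> X).
Hypothesis alphaG : in_Geom alpha.

Lemma Geom_dist g x y : ms_d (alpha g x) (alpha g y) = ms_d x y.
Proof. by case: alphaG => _ [_ [[/(_ g)[]]]]. Qed.

Lemma Geom_actM g h x : alpha (tg_mul g h) x = alpha g (alpha h x).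
Proof. by case: alphaG => _ [_ [[_ []]]]. Qed.

Lemma Geom_orbit_dist_continuous x y : continuous (fun g => ms_d (alpha g x) y).
Proof.
case: alphaG => _ [_ [_ [cont _]]] g; apply/(@cvgrPdist_lt _ R^o) => e e0.
have [U [Ug dU]] := cont x g e e0; apply: filterS Ug => h /dU dgh.
have := ms_d_tri (alpha g x) (alpha h x) y; have := ms_d_tri (alpha h x) (alpha g x) y.
have := ms_dC (alpha h x) (alpha g x); rewrite ltr_norml; lra.
Qed.

Lemma Geom_compact_orbit_bounded (C : set G) x : compact C ->
  exists M, forall c, C c -> ms_d (alpha c x) x <= M.
Proof.
move=> cC; have [M0 [_ M0bound]] := @compact_bounded _ R^o _
  (continuous_compact (continuous_subspaceT (@Geom_orbit_dist_continuous x x)) cC).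
exists (M0 + 1) => c Cc; apply: le_trans (ler_norm _) _.
by apply: (M0bound (M0 + 1)); [rewrite ltrDl | exists c].
Qed.

Lemma Geom_translate_mcompact (C : set G) (K : set X) : compact C -> mcompact K ->
  exists K' : set X, mcompact K' /\ forall c k, C c -> K k -> K' (alpha c k).
Proof.
move=> cC cK; have [[z Kz]|noK] := pselect (K !=set0); last first.
  by exists K; split => // c k _ Kk; exfalso; apply: noK; exists k.
have [Mk Mkb] := mcompact_bounded z cK.
have [Mc Mcb] := Geom_compact_orbit_bounded z cC.
exists [set y | ms_d z y <= Mc + Mk]; split; first by case: alphaG => properX _; exact: properX.
move=> c k Cc Kk /=; have := ms_d_tri z (alpha c z) (alpha c k).
rewrite Geom_dist; have := ms_dC z (alpha c z); have := Mcb c Cc; have := Mkb k Kk; lra.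
Qed.

End GeomAction.

Definition cocompact_range (H G : TopGroup) (f : H -> G) :=
  exists C : set G, compact C /\ forall g : G, exists h c, C c /\ g = tg_mul (f h) c.

Lemma in_Geom_comp (H G : TopGroup) (f : H -> G) (X : MetricSpace) (alpha : G -> X -> X) :
  group_hom f -> continuous f -> proper_map f -> cocompact_range f ->
  in_Geom alpha -> in_Geom (fun h => alpha (f h)).
Proof.
move=> fM fC fP [C [cC Ccover]] alphaG.
case: (alphaG) => properX [geoX [[iso [actM act1]] [cont [prop [K [cK Kcover]]]]]].
split => //; split => //; split.
  split; first by move=> h; exact: iso.
  by split => [g h x|x]; rewrite ?fM ?actM ?group_hom1.
split.
  move=> x h e e0; have [U [Ufh dU]] := cont x (f h) e e0.
  by exists (f @^-1` U); split; [exact: fC | move=> h' /dU].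
split.
  move=> K' cK'; have [E cE sE] := fP _ (prop K' cK').
  apply: subclosed_compact cE _; first exact: closed_closure.
  by move=> h /(closure_preimage fC) /sE.
have [K'' [cK'' K''P]] := Geom_translate_mcompact alphaG cC cK.
exists K''; split => // x; have [g [k [Kk ->]]] := Kcover x.
have [h [c [Cc ->]]] := Ccover g.
by exists h, (alpha c k); split; [exact: K''P | rewrite actM].
Qed.

Lemma orbital_rough_similarity_cocompact (H G : TopGroup) (f : H -> G)
    (X Y : MetricSpace) (alpha : G -> X -> X) (beta : G -> Y -> Y) (oX : X) (oY : Y) :
  in_Geom alpha -> in_Geom beta -> cocompact_range f ->
  orbital_map_rough_similarity (fun h => alpha (f h)) (fun h => beta (f h)) oX oY ->
  orbital_map_rough_similarity alpha beta oX oY.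
Proof.
move=> alphaG betaG [C [cC Ccover]] [phi [phi_sim [C0 C0P]]].
have [lam [c0 [lam0 [_ phiP]]]] := phi_sim.
have [Mx Mxb] := Geom_compact_orbit_bounded alphaG oX cC.
have [My Myb] := Geom_compact_orbit_bounded betaG oY cC.
exists phi; split => //.
exists (lam * Mx + c0 + C0 + My) => g; have [h [c [Cc ->]]] := Ccover g.
rewrite (Geom_actM alphaG) (Geom_actM betaG).
set xh := alpha (f h) oX; set xhc := alpha (f h) (alpha c oX).
set yh := beta (f h) oY; set yhc := beta (f h) (beta c oY).
have /andP[_ phi_xhc] := phiP xhc xh; rewrite Geom_dist // in phi_xhc.
have yh_yhc : ms_d yh yhc = ms_d (beta c oY) oY by rewrite Geom_dist // ms_dC.
have := ler_wpM2l (ltW lam0) (Mxb c Cc); have := Myb c Cc; have := C0P h.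
have := ms_d_tri (phi xhc) (phi xh) yhc; have := ms_d_tri (phi xh) yh yhc.
rewrite -/xh -/yh; lra.
Qed.

Lemma Geom_orbital_rough_similar_proper_cocompact (H G : TopGroup) (f : H -> G) :
  group_hom f -> continuous f -> proper_map f -> cocompact_range f ->
  Geom_orbital_rough_similar H -> Geom_orbital_rough_similar G.
Proof.
move=> fM fC fP fCC simH X Y alpha beta alphaG betaG oX oY.
apply: (orbital_rough_similarity_cocompact alphaG betaG fCC).
by apply: simH; apply: in_Geom_comp.
Qed.

Local Close Scope ring_scope.
Unset Implicit Arguments.

Theorem proposition6p1 (H : TopGroup) :
  locally_compact_group H -> compactly_generated H ->
  Geom_orbital_rough_similar H ->
  (forall K : set H, compact K -> normal_subgroup K ->
     forall (Q : TopGroup) (pi : H -> Q),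
       group_hom pi -> continuous pi -> (forall U : set H, open U -> open (pi @` U)) ->
       (forall q : Q, exists h : H, pi h = q) ->
       (forall h : H, pi h = tg_one <-> K h) ->
       Geom_orbital_rough_similar Q) /\
  (forall (G : TopGroup) (iota : H -> G),
     locally_compact_group G -> group_hom iota -> continuous iota -> injective iota ->
     closed (range iota) ->
     (exists C : set G, compact C /\ forall g : G, exists h c, C c /\ g = tg_mul (iota h) c) ->
     Geom_orbital_rough_similar G).
Proof.
move=> lcH cgH simH; split.
  move=> K cK _ Q pi piM piC piO piS piK.
  apply: (Geom_orbital_rough_similar_proper_cocompact piM piC _ _ simH).
    exact: quotient_map_proper lcH cK piM piO piS piK.
  exists [set tg_one]; split => [|q]; first exact: compact_set1.
  by have [h <-] := piS q; exists h, tg_one; rewrite tg_mulg1.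
move=> G iota lcG iM iC iI clR iCC.
apply: (Geom_orbital_rough_similar_proper_cocompact iM iC _ iCC simH).
exact: closed_embedding_proper.
Qed.
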